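(* Let $\mathcal{I}\subseteq[K]$ be nonempty, $\theta>0$, and let $\psi,r$ be strictly convex twice differentiable functions on $\Omega\subseteq\mathbb{R}$ such that, for positive learning rates $\gamma^s_i$ ($s\in\{t,t+1\}$, $i\in\mathcal{I}$), each $\gamma^s_i\psi+\theta r$ has invertible derivative whose inverse is differentiable and convex. Let $\phi^s_{\mathcal{I}}(x)=\sum_{i\in\mathcal{I}}(\gamma^s_i\psi(x_i)+\theta r(x_i))$, $\hat\ell^t\in\mathbb{R}^K$, $c\in\mathbb{R}$, and $p,q$ with $p_i,q_i\in\Omega$ for $i\in\mathcal{I}$, $\sum_{i\in\mathcal{I}}p_i=\sum_{i\in\mathcal{I}}q_i$, and $\nabla\phi^{t+1}_{\mathcal{I}}(q)=\nabla\phi^t_{\mathcal{I}}(p)-\hat\ell^t_{\mathcal{I}}+c\cdot\mathbf{1}_{\mathcal{I}}$. Writing $A_i(u)=\gamma^{t+1}_i\psi''(u)+\theta r''(u)$ and $B_i(u)=\gamma^{t}_i\psi''(u)+\theta r''(u)$, we have $$c\le\Big(\sum_{i\in\mathcal{I}}\frac{1}{A_i(p_i)}\Big)^{-1}\sum_{i\in\mathcal{I}}\frac{(\gamma^{t+1}_i-\gamma^t_i)\psi'(p_i)+\hat\ell^t_i}{A_i(p_i)},\qquad c\ge\Big(\sum_{i\in\mathcal{I}}\frac{1}{B_i(q_i)}\Big)^{-1}\sum_{i\in\mathcal{I}}\frac{(\gamma^{t+1}_i-\gamma^t_i)\psi'(q_i)+\hat\ell^t_i}{B_i(q_i)},$$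 $$c\le\Big(\sum_{i\in\mathcal{I}}\frac{1}{B_i(p_i)}\Big)^{-1}\sum_{i\in\mathcal{I}}\frac{(\gamma^{t+1}_i-\gamma^t_i)\psi'(q_i)+\hat\ell^t_i}{B_i(p_i)},\qquad c\ge\Big(\sum_{i\in\mathcal{I}}\frac{1}{A_i(q_i)}\Big)^{-1}\sum_{i\in\mathcal{I}}\frac{(\gamma^{t+1}_i-\gamma^t_i)\psi'(p_i)+\hat\ell^t_i}{A_i(q_i)}.$$
   Context: Gradients of $\phi^s_{\mathcal{I}}$ are taken coordinatewise on $\mathcal{I}$; $v_{\mathcal{I}}$ agrees with $v$ on $\mathcal{I}$ and is $0$ elsewhere; $\mathbf{1}_{\mathcal{I}}$ is the indicator vector of $\mathcal{I}$; the gradient equation is required coordinatewise for $i\in\mathcal{I}$. *)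

From HB Require Import structures.
From mathcomp Require Import all_boot all_order all_algebra.
From mathcomp Require Import all_classical all_reals all_analysis.
Set Implicit Arguments. Unset Strict Implicit. Unset Printing Implicit Defensive.
Import Order.TTheory GRing.Theory Num.Theory.
Import numFieldNormedType.Exports.
Local Open Scope classical_set_scope.
Local Open Scope ring_scope.

Definition convex_on (R : realType) (D : set R) (f : R -> R) :=
  forall x y, D x -> D y -> forall t : R, 0 <= t <= 1 ->
    f (t * x + (1 - t) * y) <= t * f x + (1 - t) * f y.

Definition strictly_convex_on (R : realType) (D : set R) (f : R -> R) :=
  forall x y, D x -> D y -> x != y -> forall t : R, 0 < t < 1 ->
    f (t * x + (1 - t) * y) < t * f x + (1 - t) * f y.

Definition differentiable_on (R : realType) (D : set R) (f : R -> R) :=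
  forall x, D x -> derivable f x 1.

Definition twice_differentiable_on (R : realType) (D : set R) (f : R -> R) :=
  differentiable_on D f /\ differentiable_on D (derive1 f).

Definition inv_deriv_diff_convex (R : realType) (D : set R) (f : R -> R) :=
  exists g : R -> R,
    (forall x, D x -> g ((derive1 f) x) = x) /\
    (forall y, ((derive1 f) @` D) y -> D (g y) /\ (derive1 f) (g y) = y) /\
    differentiable_on ((derive1 f) @` D) g /\
    convex_on ((derive1 f) @` D) g.

Definition phiI (R : realType) (K : nat) (I : {set 'I_K}) (gam : 'I_K -> R)
  (theta : R) (psi r : R -> R) (x : 'I_K -> R) : R :=
  \sum_(i in I) (gam i * psi (x i) + theta * r (x i)).

Definition partial (R : realType) (K : nat) (F : ('I_K -> R) -> R)
  (i : 'I_K) (x : 'I_K -> R) : R :=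
  derive1 (fun u : R => F (fun j => if j == i then u else x j)) (x i).

(* Write F = gamma psi + theta r for either learning rate and g for the
   inverse of F'.  As g is convex, for x, y in Omega
     y - x = g (F' y) - g (F' x) >= g' (F' x) (F' y - F' x)
           = (F' y - F' x) / F'' x,
   with F'' x > 0 because g' (F' x) F'' x = 1.  The gradient equation makes
   F'(q_i) - F'(p_i) equal to c minus the i-th numerator of the statement, for
   both learning rates.  Taking (x, y) = (p_i, q_i) or (q_i, p_i), weighting by
   1 / F'' x and summing over I, the right-hand sides cancel since
   sum p = sum q; this bounds c by the corresponding weighted mean. *)

From HB Require Import structures.
From mathcomp Require Import all_boot all_order all_algebra.
From mathcomp Require Import all_classical all_reals all_analysis.
From mathcomp Require Import ring lra.
Import Order.TTheory GRing.Theory Num.Theory.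
Import numFieldNormedType.Exports.
Local Open Scope classical_set_scope.
Local Open Scope ring_scope.

Lemma strictly_convex_onW {R : realType} {D : set R} {f : R -> R} :
  strictly_convex_on D f -> convex_on D f.
Proof.
move=> sf x y Dx Dy t /andP[t0 t1].
have [->|xy] := eqVneq x y; first by rewrite -!mulrDl addrC subrK !mul1r.
have [->|t_neq0] := eqVneq t 0; first by rewrite subr0 !mul0r !mul1r !add0r.
have [->|t_neq1] := eqVneq t 1; first by rewrite subrr !mul0r !mul1r !addr0.
by apply/ltW/sf => //; rewrite !lt_neqAle eq_sym t_neq0 t_neq1 t0 t1.
Qed.

Lemma convex_on_lincomb {R : realType} {D : set R} {psi r : R -> R} {a b : R} :
  0 <= a -> 0 <= b -> convex_on D psi -> convex_on D r ->
  convex_on D (fun x => a * psi x + b * r x).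
Proof.
move=> a0 b0 cpsi cr x y Dx Dy t t01.
have -> : t * (a * psi x + b * r x) + (1 - t) * (a * psi y + b * r y)
    = a * (t * psi x + (1 - t) * psi y) + b * (t * r x + (1 - t) * r y) by ring.
by apply: lerD; apply: ler_wpM2l => //; [exact: cpsi | exact: cr].
Qed.

Lemma derive_dirE {R : realType} (f : R -> R) x v :
  derivable f x 1 -> 'D_v f x = v * derive1 f x.
Proof.
move=> /derivable1_diffP df.
by rewrite derive1E !deriveE // -{1}[v]mulr1 -[v * 1]/(v *: 1) linearZ.
Qed.

Lemma derive1_left_inverse {R : realType} {D : set R} {k h : R -> R} {x : R} :
  open D -> D x -> (forall z, D z -> h (k z) = z) ->
  derivable k x 1 -> derivable h (k x) 1 -> derive1 h (k x) * derive1 k x = 1.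
Proof.
move=> oD Dx hk dk dh; rewrite -derive1_comp // -(derive1_id x) !derive1E.
apply: near_eq_derive; near=> z.
have Dz : D z by near: z; exact: oD.
by rewrite /= hk.
Unshelve. all: end_near.
Qed.

Lemma convex_on_tangent_le {R : realType} {D : set R} {f : R -> R}
    (f_convex : convex_on D f) x y : D x -> D y -> derivable f x 1 ->
  derive1 f x * (y - x) <= f y - f x.
Proof.
move=> Dx Dy dfx.
have [->|yx] := eqVneq y x; first by rewrite !subrr mulr0.
rewrite mulrC -derive_dirE //.
have dfxy : derivable f x (y - x).
  by apply: diff_derivable; apply/derivable1_diffP.
set q := fun t : R => t^-1 *: (f (t *: (y - x) + x) - f x).
have q_right : q @ 0^'+ --> 'D_(y - x) f x.
  apply: cvg_trans dfxy => A /= [e /= e0 He]; exists e => //= t te t0.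
  by apply: He => //; rewrite gt_eqF.
apply: (cvgr_to_le q_right); near=> t.
have t0 : 0 < t by near: t; exact: nbhs_right_gt.
have t1 : t < 1 by near: t; exact: nbhs_right_lt.
have t01 : 0 <= t <= 1 by rewrite !ltW.
have := f_convex _ _ Dy Dx t t01.
rewrite /q /GRing.scale /= ler_pdivrMl //.
have -> : t * (y - x) + x = t * y + (1 - t) * x by ring.
lra.
Unshelve. all: end_near.
Qed.

Section ConvexDerivative.
Context {R : realType} {D : set R} {f : R -> R}.
Hypothesis f_convex : convex_on D f.
Hypothesis f_derivable : forall x, D x -> derivable f x 1.

Lemma convex_on_derive1_monotone x z : D x -> D z ->
  0 <= (derive1 f z - derive1 f x) * (z - x).
Proof.
move=> Dx Dz.
have := convex_on_tangent_le f_convex x z Dx Dz (f_derivable x Dx).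
have := convex_on_tangent_le f_convex z x Dz Dx (f_derivable z Dz).
nra.
Qed.

Hypothesis D_open : open D.

Lemma convex_on_derive2_ge0 x : D x -> derivable (derive1 f) x 1 ->
  0 <= derive1 (derive1 f) x.
Proof.
move=> Dx df'x.
have [e e0 xeD] : exists2 e : R, 0 < e & ball x e `<=` D.
  by apply/nbhs_ballP; exact: D_open.
rewrite derive1E /derive; apply: limr_ge; first exact: df'x.
exists e => //= t te t0.
have Dxt : D (t + x).
  apply: xeD; move: te; rewrite /ball /= sub0r !normrN.
  by rewrite (_ : x - (t + x) = - t) ?normrN //; ring.
have := convex_on_derive1_monotone x (t + x) Dx Dxt.
rewrite /GRing.scale /= mulr1 addrK => mono.
have -> : t^-1 * (derive1 f (t + x) - derive1 f x) =
    ((derive1 f (t + x) - derive1 f x) * t) * t^-1 ^+ 2 by field.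
by rewrite mulr_ge0 // sqr_ge0.
Qed.

Lemma inv_deriv_convex_derive2_bound x y :
  inv_deriv_diff_convex D f -> (forall z, D z -> derivable (derive1 f) z 1) ->
  D x -> D y ->
  0 < derive1 (derive1 f) x /\
  (derive1 f y - derive1 f x) / derive1 (derive1 f) x <= y - x.
Proof.
move=> [g [gf' [_ [g_derivable g_convex]]]] df' Dx Dy.
have Df'x : (derive1 f @` D) (derive1 f x) by exists x.
have Df'y : (derive1 f @` D) (derive1 f y) by exists y.
have g'f'' := derive1_left_inverse D_open Dx gf' (df' _ Dx) (g_derivable _ Df'x).
have f''_neq0 : derive1 (derive1 f) x != 0.
  by apply: contra_eq_neq g'f'' => ->; rewrite mulr0 eq_sym oner_neq0.
have g'E : derive1 g (derive1 f x) = (derive1 (derive1 f) x)^-1.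
  by apply: (mulIf f''_neq0); rewrite g'f'' mulVf.
split; first by rewrite lt_def f''_neq0 convex_on_derive2_ge0 //; exact: df'.
have := convex_on_tangent_le g_convex _ _ Df'x Df'y (g_derivable _ Df'x).
by rewrite g'E !gf' // mulrC.
Qed.

End ConvexDerivative.

Section LinearCombination.
Context {R : realType} (a b : R) {psi r : R -> R} {z : R}.
Hypotheses (dpsi : derivable psi z 1) (dr : derivable r z 1).

Lemma is_derive1_lincomb : is_derive z 1 (fun x => a * psi x + b * r x)
  (a * derive1 psi z + b * derive1 r z).
Proof.
have := derivableP dpsi; have := derivableP dr; rewrite !derive1E => dr1 dpsi1.
exact: is_deriveD.
Qed.

Lemma derivable_lincomb : derivable (fun x => a * psi x + b * r x) z 1.
Proof. by have [] := is_derive1_lincomb. Qed.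

Lemma derive1_lincomb :
  derive1 (fun x => a * psi x + b * r x) z = a * derive1 psi z + b * derive1 r z.
Proof. by rewrite derive1E; have [] := is_derive1_lincomb. Qed.

End LinearCombination.

Section LinearCombinationOnOpen.
Context {R : realType} {D : set R} {psi r : R -> R} (a b : R).
Hypotheses (D_open : open D)
  (psi2 : twice_differentiable_on D psi) (r2 : twice_differentiable_on D r).

Let derive1_lincomb_near z : D z ->
  \near z, a * derive1 psi z + b * derive1 r z
           = derive1 (fun x => a * psi x + b * r x) z.
Proof.
move=> Dz; near=> x.
have Dx : D x by near: x; exact: D_open.
by rewrite (derive1_lincomb a b (psi2.1 x Dx) (r2.1 x Dx)).
Unshelve. all: end_near.
Qed.

Lemma derivable_derive1_lincomb z : D z ->
  derivable (derive1 (fun x => a * psi x + b * r x)) z 1.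
Proof.
move=> Dz; apply: near_eq_derivable (derive1_lincomb_near z Dz) _.
exact (derivable_lincomb a b (psi2.2 z Dz) (r2.2 z Dz)).
Qed.

Lemma derive2_lincomb z : D z ->
  derive1 (derive1 (fun x => a * psi x + b * r x)) z
  = a * derive1 (derive1 psi) z + b * derive1 (derive1 r) z.
Proof.
move=> Dz; rewrite derive1E -(near_eq_derive _ (derive1_lincomb_near z Dz)).
by rewrite -derive1E (derive1_lincomb a b (psi2.2 z Dz) (r2.2 z Dz)).
Qed.

Hypotheses (b_ge0 : 0 <= b)
  (psi_convex : convex_on D psi) (r_convex : convex_on D r).

Lemma lincomb_derive2_bound {x y d} : 0 <= a ->
  inv_deriv_diff_convex D (fun u => a * psi u + b * r u) -> D x -> D y ->
  a * derive1 psi y + b * derive1 r y - (a * derive1 psi x + b * derive1 r x) = d ->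
  0 < (a * derive1 (derive1 psi) x + b * derive1 (derive1 r) x)^-1 /\
  d * (a * derive1 (derive1 psi) x + b * derive1 (derive1 r) x)^-1 <= y - x.
Proof.
move=> a_ge0 inv_convex Dx Dy <-.
have := inv_deriv_convex_derive2_bound
  (convex_on_lincomb a_ge0 b_ge0 psi_convex r_convex)
  (fun z Dz => derivable_lincomb a b (psi2.1 z Dz) (r2.1 z Dz)) D_open
  x y inv_convex derivable_derive1_lincomb Dx Dy.
rewrite derive2_lincomb // (derive1_lincomb a b (psi2.1 x Dx) (r2.1 x Dx)).
by rewrite (derive1_lincomb a b (psi2.1 y Dy) (r2.1 y Dy)) invr_gt0.
Qed.

End LinearCombinationOnOpen.

Lemma partial_phiI {R : realType} {K : nat} {I : {set 'I_K}} (g : 'I_K -> R)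
    (theta : R) {psi r : R -> R} {x : 'I_K -> R} {i : 'I_K} :
  i \in I -> derivable psi (x i) 1 -> derivable r (x i) 1 ->
  partial (phiI I g theta psi r) i x
  = g i * derive1 psi (x i) + theta * derive1 r (x i).
Proof.
move=> iI dpsi dr; rewrite /partial /phiI -(derive1_lincomb _ _ dpsi dr).
set C := \sum_(j in I | j != i) (g j * psi (x j) + theta * r (x j)).
have -> : (fun u => \sum_(j in I) (g j * psi (if j == i then u else x j) +
                     theta * r (if j == i then u else x j))) =
          (fun u => g i * psi u + theta * r u) + cst C.
  apply/funext => u /=; rewrite (bigD1 i) //= eqxx; congr (_ + _).
  by apply: eq_bigr => j /andP[_ /negbTE ->].
rewrite derive1E deriveD ?derive_cst ?addr0 -?derive1E //.
exact: derivable_lincomb.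
Qed.

Section WeightedMean.
Context {R : realType} {T : finType} {I : {set T}} {w a x y : T -> R} {c : R}.
Hypotheses (I_neq0 : I != finset.set0)
  (sum_xy : \sum_(i in I) x i = \sum_(i in I) y i).

Lemma le_weighted_mean :
  (forall i, i \in I -> 0 < w i /\ (c - a i) * w i <= y i - x i) ->
  c <= (\sum_(i in I) w i)^-1 * \sum_(i in I) (a i * w i).
Proof.
move=> H.
have [i0 i0I] := set0Pn I I_neq0.
have sum_w_gt0 : 0 < \sum_(i in I) w i.
  rewrite (bigD1 i0) //= ltr_pwDl ?(H i0 i0I).1 //.
  by apply: sumr_ge0 => j /andP[jI _]; exact/ltW/(H j jI).1.
have : \sum_(i in I) (c - a i) * w i <= \sum_(i in I) (y i - x i).
  by apply: ler_sum => i iI; exact: (H i iI).2.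
rewrite sumrB -sum_xy subrr.
under eq_bigr do rewrite mulrBl.
by rewrite sumrB -mulr_sumr subr_le0 -ler_pdivlMr // mulrC.
Qed.

End WeightedMean.

Lemma weighted_mean_le {R : realType} {T : finType} {I : {set T}}
    {w a x y : T -> R} {c : R} :
  I != finset.set0 -> \sum_(i in I) x i = \sum_(i in I) y i ->
  (forall i, i \in I -> 0 < w i /\ (a i - c) * w i <= y i - x i) ->
  (\sum_(i in I) w i)^-1 * \sum_(i in I) (a i * w i) <= c.
Proof.
move=> I_neq0 sum_xy H.
have -> : \sum_(i in I) (a i * w i) = - \sum_(i in I) (- a i * w i).
  by rewrite -sumrN; apply: eq_bigr => i _; rewrite mulNr opprK.
rewrite mulrN lerNl; apply: (le_weighted_mean I_neq0 sum_xy) => i /H.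
by rewrite opprK addrC.
Qed.

Theorem lemma36 (R : realType) (K : nat) (I : {set 'I_K}) (theta : R)
  (Omega : set R) (psi r : R -> R) (gt gt1 : 'I_K -> R)
  (ell : 'I_K -> R) (c : R) (p q : 'I_K -> R) :
  I != finset.set0 ->
  0 < theta ->
  open Omega -> is_interval Omega ->
  strictly_convex_on Omega psi -> strictly_convex_on Omega r ->
  twice_differentiable_on Omega psi -> twice_differentiable_on Omega r ->
  (forall i, i \in I -> 0 < gt i) ->
  (forall i, i \in I -> 0 < gt1 i) ->
  (forall i, i \in I ->
     inv_deriv_diff_convex Omega (fun x => gt i * psi x + theta * r x)) ->
  (forall i, i \in I ->
     inv_deriv_diff_convex Omega (fun x => gt1 i * psi x + theta * r x)) ->
  (forall i, i \in I -> Omega (p i)) ->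
  (forall i, i \in I -> Omega (q i)) ->
  \sum_(i in I) p i = \sum_(i in I) q i ->
  (forall i, i \in I ->
     partial (phiI I gt1 theta psi r) i q
     = partial (phiI I gt theta psi r) i p - ell i + c) ->
  let A i u := gt1 i * derive1 (derive1 psi) u + theta * derive1 (derive1 r) u in
  let B i u := gt i * derive1 (derive1 psi) u + theta * derive1 (derive1 r) u in
  [/\ c <= (\sum_(i in I) (A i (p i))^-1)^-1 *
           \sum_(i in I) (((gt1 i - gt i) * derive1 psi (p i) + ell i) / A i (p i)),
      c >= (\sum_(i in I) (B i (q i))^-1)^-1 *
           \sum_(i in I) (((gt1 i - gt i) * derive1 psi (q i) + ell i) / B i (q i)),
      c <= (\sum_(i in I) (B i (p i))^-1)^-1 *
           \sum_(i in I) (((gt1 i - gt i) * derive1 psi (q i) + ell i) / B i (p i))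
    & c >= (\sum_(i in I) (A i (q i))^-1)^-1 *
           \sum_(i in I) (((gt1 i - gt i) * derive1 psi (p i) + ell i) / A i (q i))].
Proof.
move=> I_neq0 theta_gt0 Omega_open _ psi_sconvex r_sconvex psi2 r2 gt_gt0 gt1_gt0
  inv_gt inv_gt1 Op Oq sum_pq grad A B.
have bound := lincomb_derive2_bound _ theta Omega_open psi2 r2 (ltW theta_gt0)
  (strictly_convex_onW psi_sconvex) (strictly_convex_onW r_sconvex).
have gradE i : i \in I ->
    gt1 i * derive1 psi (q i) + theta * derive1 r (q i)
    = gt i * derive1 psi (p i) + theta * derive1 r (p i) - ell i + c.
  move=> iI; have := grad i iI; have [Opi Oqi] := (Op i iI, Oq i iI).
  rewrite (partial_phiI gt1 theta iI (psi2.1 _ Oqi) (r2.1 _ Oqi)).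
  by rewrite (partial_phiI gt theta iI (psi2.1 _ Opi) (r2.1 _ Opi)).
split.
- apply: (le_weighted_mean I_neq0 sum_pq) => i iI.
  apply: (bound _ _ _ _ (ltW (gt1_gt0 i iI)) (inv_gt1 i iI) (Op i iI) (Oq i iI)).
  by have := gradE i iI; lra.
- apply: (weighted_mean_le I_neq0 (esym sum_pq)) => i iI.
  apply: (bound _ _ _ _ (ltW (gt_gt0 i iI)) (inv_gt i iI) (Oq i iI) (Op i iI)).
  by have := gradE i iI; lra.
- apply: (le_weighted_mean I_neq0 sum_pq) => i iI.
  apply: (bound _ _ _ _ (ltW (gt_gt0 i iI)) (inv_gt i iI) (Op i iI) (Oq i iI)).
  by have := gradE i iI; lra.
- apply: (weighted_mean_le I_neq0 (esym sum_pq)) => i iI.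
  apply: (bound _ _ _ _ (ltW (gt1_gt0 i iI)) (inv_gt1 i iI) (Oq i iI) (Op i iI)).
  by have := gradE i iI; lra.
Qed.
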